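(* Under the setting in the context, for every integer $v\ge1$ and every real $a>0$, the number $V$ of false discoveries of the knockoffs procedure with parameter $v$ satisfies $$\Pr\big(V\ge(1+a)v\big)\le\theta(a)^v,\qquad \theta(a)=\frac{(a+2)^{a+2}}{2^{a+2}(a+1)^{a+1}},$$ and $\theta(a)<1$.
   Context: Setting: $p\ge1$; $W_1,\dots,W_p$ are real random variables, almost surely pairwise distinct; $\chi_1,\dots,\chi_p$ take values in $\{-1,0,1\}$; $\mathcal H_0\subseteq\{1,\dots,p\}$ is the set of true nulls, and conditional on $(W_1,\dots,W_p)$ and $(\chi_j)_{j\notin\mathcal H_0}$, the variables $(\chi_j)_{j\in\mathcal H_0}$ are jointly independent and uniform on $\{-1,+1\}$. Knockoffs procedure with parameter $v$: let $\rho$ be the permutation with $W_{\rho(1)}>\cdots>W_{\rho(p)}$; let $j^\star$ be the position of the $v$-th $-1$ in $\chi_{\rho(1)},\dots,\chi_{\rho(p)}$ ($j^\star=p$ if fewer than $v$ entries equal $-1$); reject $\rho(j)$ for all $j\le j^\star$ with $\chi_{\rho(j)}=+1$. $V=\#\{j\in\mathcal H_0: j\text{ rejected}\}$. *)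

From HB Require Import structures.
From mathcomp Require Import all_boot all_order all_algebra all_fingroup.
From Stdlib Require Import Reals.

Set Implicit Arguments.
Unset Strict Implicit.
Unset Printing Implicit Defensive.

(* The signs +1, 0, -1 as elements of MathComp's int (written with the
   constructors to avoid scope clashes between ring_scope and R_scope). *)
Definition ip1 : int := Posz 1.
Definition i0 : int := Posz 0.
Definition im1 : int := Negz 0.  (* = -1 *)

Definition Rle_b (x y : R) : bool := if Rle_dec x y then true else false.

Definition chi_full (p : nat) (H0 : {set 'I_p}) (chi0 : 'I_p -> int)
  (s : {ffun 'I_p -> bool}) : 'I_p -> int :=
  fun j => if j \in H0 then (if s j then ip1 else im1) else chi0 j.

(* rho i = index with the (i+1)-th largest W (0-based position i).
   jstar0 = 0-based position of the v-th entry equal to -1 in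
   chi (rho 0), ..., chi (rho (p-1)), or p if there are fewer than v such
   entries.  (So the paper's 1-based j* is jstar0+1, resp. p.) *)
Definition jstar0 (p : nat) (rho : {perm 'I_p}) (v : nat) (chi : 'I_p -> int) : nat :=
  let sq := [seq chi (rho i) | i <- enum 'I_p] in
  find (fun i => count (pred1 im1) (take i.+1 sq) == v) (iota 0 p).

Definition rejected (p : nat) (rho : {perm 'I_p}) (v : nat) (chi : 'I_p -> int)
  : {set 'I_p} :=
  [set j | (nat_of_ord ((rho^-1)%g j) <= jstar0 rho v chi)%N && (chi j == ip1)].

Definition false_disc (p : nat) (H0 : {set 'I_p}) (rho : {perm 'I_p}) (v : nat)
  (chi : 'I_p -> int) : nat := #|H0 :&: rejected rho v chi|.

(* Conditional probability (given W and the non-null signs chi0) that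
   V >= (1+a) v, the null signs being i.i.d. uniform on {-1,+1}.  We draw all
   p coins uniformly; only the coordinates in H0 are used, so this is exactly
   the uniform law on {-1,+1}^H0 for the null signs. *)
Definition prob_V_ge (p : nat) (H0 : {set 'I_p}) (rho : {perm 'I_p})
  (chi0 : 'I_p -> int) (v : nat) (a : R) : R :=
  (INR #|[set s : {ffun 'I_p -> bool} |
          Rle_b ((1 + a) * INR v)%R (INR (false_disc H0 rho v (chi_full H0 chi0 s)))]|
   / INR (2 ^ p))%R.

Definition theta (a : R) : R :=
  (Rpower (a + 2) (a + 2) / (Rpower 2 (a + 2) * Rpower (a + 1) (a + 1)))%R.

From HB Require Import structures.
From mathcomp Require Import all_boot all_order all_algebra all_fingroup.
From Stdlib Require Import Reals Lra.
From mathcomp Require Import Rstruct.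

(* A Chernoff bound.  Put z = 2(a+1)/(a+2) and c = (a+2)/2, so that
   z c + 1 = 2 c.  Scanning the signs in decreasing order of W with a budget of
   k remaining -1's, one shows E[z^V] <= c^k by induction along the scan: a
   null coordinate is +1 (one more false discovery, factor z, same budget) or
   -1 (budget k-1) with probability 1/2 each, giving (z c^k + c^(k-1))/2 = c^k;
   a non-null coordinate never increases the budget and c >= 1.  Markov's
   inequality then gives P(V >= (1+a)v) <= c^v / z^((1+a)v) = theta(a)^v, and
   theta(a) < 1 amounts to ln c < (a+1) ln z, which follows from
   ln x < x - 1 applied to c and to 1/z. *)

Fixpoint scan_fd (k : nat) (L : seq (int * bool)) {struct L} : nat :=
  if L is (c, null) :: L' then
    if k is k'.+1 then
      if c == ip1 then null + scan_fd k L'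
      else if c == im1 then scan_fd k' L' else scan_fd k L'
    else 0
  else 0.

Lemma scan_fd0 L : scan_fd 0 L = 0.
Proof. by case: L => [|[]]. Qed.

Lemma scan_fd_prefix L k : 0 < k ->
  count (fun x => (x.1 == ip1) && x.2)
    (take (find (fun i => count (pred1 im1) (take i.+1 (unzip1 L)) == k)
                (iota 0 (size L))).+1 L)
  = scan_fd k L.
Proof.
elim: L k => [|[c n] L IH] [|k] //= _.
rewrite -(add1n 0) iotaDl find_map /= take0.
case: (eqVneq c im1) => [-> | c_im1] /=.
- case: k => [|k] /=; first by rewrite take0 scan_fd0.
  by rewrite -(IH k.+1).
- under eq_find => i do rewrite /= add0n.
  by rewrite -IH //; case: (c == ip1).
Qed.

Lemma filter_enum_ord_ltn p n :
  [seq i : 'I_p <- enum 'I_p | i < n] = take n (enum 'I_p).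
Proof.
apply: (inj_map val_inj).
rewrite map_take -(filter_map _ (fun i : nat => i < n)) val_enum_ord take_iota.
case: (leqP n p) => [le_np | lt_pn].
- by rewrite -{1}(add0n n) filter_iota_ltn.
- apply/all_filterP/allP => i.
  by rewrite mem_iota => /andP [_ /leq_trans]; apply; exact: ltnW.
Qed.

Definition scan_seq {p} (H0 : {set 'I_p}) (rho : {perm 'I_p}) (chi : 'I_p -> int) :=
  [seq (chi (rho i), rho i \in H0) | i <- enum 'I_p].

Lemma false_disc_scan p (H0 : {set 'I_p}) (rho : {perm 'I_p}) v (chi : 'I_p -> int) :
  0 < v -> false_disc H0 rho v chi = scan_fd v (scan_seq H0 rho chi).
Proof.
move=> v_gt0; rewrite /false_disc -(card_preimset _ (@perm_inj _ rho)).
rewrite cardE /enum_mem size_filter.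
rewrite -scan_fd_prefix // /unzip1 /scan_seq -map_comp size_map size_enum_ord.
rewrite -/(jstar0 rho v chi) -map_take count_map -filter_enum_ord_ltn count_filter enumT.
apply: eq_count => i /=; rewrite !inE permK ltnS.
by case: (rho i \in H0); case: (_ == ip1); rewrite ?andbT ?andbF.
Qed.

Section CoinFlip.
Import GRing.Theory Num.Theory.
Local Open Scope ring_scope.
Context {I : finType}.
Local Notation coins := {ffun I -> bool}.

Definition flip (j : I) (s : coins) : coins :=
  [ffun i => if i == j then ~~ s j else s i].

Lemma flipK j : involutive (flip j).
Proof.
move=> s; apply/ffunP => i; rewrite !ffunE eqxx.
by case: eqVneq => [->|]; rewrite ?negbK.
Qed.

Lemma flip_id j s : flip j s j = ~~ s j.
Proof. by rewrite ffunE eqxx. Qed.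

Lemma sum_coin_if {R : numFieldType} j (f g : coins -> R) :
  (forall s, f (flip j s) = f s) -> (forall s, g (flip j s) = g s) ->
  \sum_(s : coins) (if s j then f s else g s)
  = (\sum_(s : coins) f s + \sum_(s : coins) g s) / 2.
Proof.
move=> f_flip g_flip.
have swap : \sum_(s : coins) (if s j then f s else g s)
          = \sum_(s : coins) (if s j then g s else f s).
  rewrite (reindex_inj (inv_inj (flipK j))) /=.
  by apply: eq_bigr => s _; rewrite flip_id f_flip g_flip; case: (s j).
apply: (canRL (mulfK _)); first by rewrite pnatr_eq0.
rewrite -big_split mulr_natr mulr2n {2}swap -big_split /=.
by apply: eq_bigr => s _; case: (s j); rewrite // addrC.
Qed.

End CoinFlip.

Section MomentBound.
Import Order.TTheory GRing.Theory Num.Theory.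
Local Open Scope ring_scope.

Lemma chernoff_step {R : realFieldType} (z c M A B : R) :
  0 <= z -> 0 <= M -> z * c + 1 <= 2 * c -> A <= M * c -> B <= M ->
  (z * A + B) / 2 <= M * c.
Proof.
move=> z_ge0 M_ge0 zc_le A_le B_le; rewrite ler_pdivrMr //.
apply: le_trans (lerD (ler_wpM2l z_ge0 A_le) B_le) _.
rewrite mulrCA -[X in _ + X]mulr1 -mulrDr -mulrA [c * 2]mulrC.
exact: ler_wpM2l.
Qed.

Context {p : nat} (H0 : {set 'I_p}) (chi0 : 'I_p -> int).
Context {R : realFieldType} {z c : R}.
Hypotheses (z_ge0 : 0 <= z) (c_ge1 : 1 <= c) (zc_le : z * c + 1 <= 2 * c).
Local Notation coins := {ffun 'I_p -> bool}.
Local Notation N := (#|coins|%:R : R).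

Definition scan_list (s : coins) (r : seq 'I_p) :=
  [seq (chi_full H0 chi0 s j, j \in H0) | j <- r].

Lemma scan_list_flip j s r : j \notin r -> scan_list (flip j s) r = scan_list s r.
Proof.
move=> j_r; apply/eq_in_map => i i_r; rewrite /chi_full ffunE.
by case: eqVneq i_r => [->|]; rewrite ?(negbTE j_r).
Qed.

Lemma sum_scan_fd_le r : uniq r -> forall k,
  \sum_(s : coins) z ^+ scan_fd k (scan_list s r) <= N * c ^+ k.
Proof.
have c_ge0 : 0 <= c by apply: le_trans c_ge1.
elim: r => [_ k | j r IH /= /andP [j_r /IH {}IH] [|k]].
- rewrite (eq_bigr (fun _ => 1)) => [|s _]; last by case: k.
  by rewrite sumr_const ler_peMr // exprn_ege1.
- by rewrite (eq_bigr (fun _ => 1)) => [|s _]; rewrite ?sumr_const ?expr0 ?mulr1 ?scan_fd0.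
case: (boolP (j \in H0)) => j_H0.
- rewrite (eq_bigr (fun s : coins => if s j then z * z ^+ scan_fd k.+1 (scan_list s r)
                                     else z ^+ scan_fd k (scan_list s r))); last first.
    by move=> s _; rewrite /scan_list /= /chi_full j_H0; case: (s j); rewrite //= add1n exprS.
  rewrite sum_coin_if => [|s|s]; rewrite ?scan_list_flip //.
  rewrite -mulr_sumr exprSr mulrA; apply: chernoff_step => //.
    by rewrite mulr_ge0 ?exprn_ge0.
  by rewrite -mulrA -exprSr IH.
- rewrite /scan_list /= /chi_full (negbTE j_H0) /=.
  case: (chi0 j == ip1); first exact: IH.
  case: (chi0 j == im1); last exact: IH.
  apply: le_trans (IH k) _.
  by rewrite ler_wpM2l // exprS ler_peMl ?exprn_ge0.
Qed.

Lemma sum_false_disc_le (rho : {perm 'I_p}) (v : nat) : (0 < v)%nat ->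
  \sum_(s : coins) z ^+ false_disc H0 rho v (chi_full H0 chi0 s) <= N * c ^+ v.
Proof.
move=> v_gt0; have uniq_rho : uniq [seq rho i | i <- enum 'I_p].
  by rewrite map_inj_uniq ?enum_uniq //; apply: perm_inj.
rewrite (eq_bigr (fun s => z ^+ scan_fd v (scan_list s [seq rho i | i <- enum 'I_p]))).
  exact: sum_scan_fd_le.
by move=> s _; rewrite false_disc_scan // /scan_list -map_comp.
Qed.

End MomentBound.

Section Markov.
Import Order.TTheory GRing.Theory Num.Theory.
Local Open Scope ring_scope.

Lemma card_mul_le_sum {R : numDomainType} {T : finType} (A : {pred T}) (f : T -> R) K :
  (forall x, 0 <= f x) -> {in A, forall x, K <= f x} -> #|A|%:R * K <= \sum_x f x.
Proof.
move=> f_ge0 K_le; rewrite mulr_natl -sumr_const big_mkcond /=.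
by apply: ler_sum => x _; case: ifPn => [/K_le|].
Qed.

End Markov.

Section Theta.
Local Open Scope R_scope.

Lemma ln_lt_sub1 x : 0 < x -> x <> 1 -> ln x < x - 1.
Proof.
move=> x_gt0 x_neq1; rewrite -(ln_exp (x - 1)); apply: ln_increasing => //.
by have := exp_ineq1 (x - 1); lra.
Qed.

Lemma theta_ratio a : 0 < a ->
  theta a = ((a + 2) / 2) / Rpower (2 * (a + 1) / (a + 2)) (a + 1).
Proof.
move=> a_gt0.
have ln_c : ln ((a + 2) / 2) = ln (a + 2) - ln 2.
  by rewrite /Rdiv ln_mult ?ln_Rinv; lra.
have ln_z : ln (2 * (a + 1) / (a + 2)) = ln 2 + ln (a + 1) - ln (a + 2).
  by rewrite /Rdiv !ln_mult ?ln_Rinv; try lra; apply: Rinv_0_lt_compat; lra.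
rewrite /theta /Rpower -[(a + 2) / 2]exp_ln; last lra.
rewrite /Rdiv Rinv_mult -!exp_Ropp -!exp_plus ln_c ln_z.
by congr exp; ring.
Qed.

Lemma theta_lt1 a : 0 < a -> theta a < 1.
Proof.
move=> a_gt0; rewrite theta_ratio // -[(a + 2) / 2]exp_ln; last lra.
rewrite /Rpower {1}/Rdiv -exp_Ropp -exp_plus -[X in _ < X]exp_0; apply: exp_increasing.
set z := 2 * (a + 1) / (a + 2).
have z_gt0 : 0 < z by apply: Rdiv_lt_0_compat; lra.
have inv_z : / z - 1 = - (a / (2 * (a + 1))) by rewrite /z; field; lra.
have frac_gt0 : 0 < a / (2 * (a + 1)) by apply: Rdiv_lt_0_compat; lra.
have ln_c : ln ((a + 2) / 2) < a / 2.
  by have := ln_lt_sub1 ((a + 2) / 2); lra.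
have ln_z : a / (2 * (a + 1)) < ln z.
  have := ln_lt_sub1 (/ z); rewrite ln_Rinv //.
  by move/(_ (Rinv_0_lt_compat _ z_gt0)); lra.
have : (a + 1) * (a / (2 * (a + 1))) < (a + 1) * ln z by apply: Rmult_lt_compat_l; lra.
have -> : (a + 1) * (a / (2 * (a + 1))) = a / 2 by field; lra.
lra.
Qed.

End Theta.

Import Order.TTheory GRing.Theory Num.Theory.

Theorem corollary1 (p : nat) (H0 : {set 'I_p}) (W : 'I_p -> R)
  (rho : {perm 'I_p}) (chi0 : 'I_p -> int) (v : nat) (a : R) :
  (1 <= p)%N ->
  (forall i i' : 'I_p, (i < i')%N -> (W (rho i') < W (rho i))%R) ->
  (forall j, j \notin H0 -> chi0 j \in [:: im1; i0; ip1]) ->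
  (1 <= v)%N ->
  (0 < a)%R ->
  (prob_V_ge H0 rho chi0 v a <= theta a ^ v)%R /\ (theta a < 1)%R.
Proof.
(* Only the order rho matters, and the non-null signs may be arbitrary. *)
move=> _ _ _ v_gt0 a_gt0; split; last exact: theta_lt1.
rewrite /prob_V_ge theta_ratio //.
set z := (2 * (a + 1) / (a + 2))%R; set c := ((a + 2) / 2)%R.
set T := Rpower z (a + 1); set A := [set s | _].
have z_ge1 : (1 <= z)%R.
  have : (0 < a / (a + 2))%R by apply: Rdiv_lt_0_compat; lra.
  have : z = (1 + a / (a + 2))%R by rewrite /z; field; lra.
  lra.
have z_ge0 : (0 <= z)%R by lra.
have c_ge1 : (1 <= c)%R by rewrite /c; lra.
have zc : (z * c + 1 = 2 * c)%R by rewrite /z /c; field; lra.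
have T_gt0 : (0 < T)%R by apply: exp_pos.
have moment := sum_false_disc_le H0 chi0 (introT RleP z_ge0) (introT RleP c_ge1)
  (introT RleP (Req_le _ _ zc)) rho v v_gt0.
rewrite card_ffun card_bool card_ord natrX mulrC in moment.
have markov s : s \in A -> (T ^ v <= z ^ false_disc H0 rho v (chi_full H0 chi0 s))%R.
  rewrite inE /Rle_b; case: Rle_dec => // fd_ge _.
  rewrite -(Rpower_pow _ _ T_gt0) -Rpower_pow; last lra.
  by rewrite /T Rpower_mult; apply: Rle_Rpower; lra.
apply/RleP; rewrite !RdivE pow_INR !INRE !RpowE expr_div_n.
rewrite ler_pdivrMr ?exprn_gt0 // mulrAC ler_pdivlMr ?exprn_gt0 //; last exact/RltP.
apply: le_trans moment; apply: card_mul_le_sum => s.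
- by rewrite exprn_ge0 //; apply/RleP.
- by move/markov/RleP; rewrite !RpowE.
Qed.
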